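(* Let $(M,g,J)$ be a Kaehler manifold, $p\in M$, and let $\{v,w\}$ and $\{x,y\}$ be orthonormal pairs in $T_pM$, $\pi=\mathrm{span}\{v,w\}$. For $\varepsilon\in\mathbb{R}$ set $A=x\wedge_gy+Jx\wedge_gJy$, $v_\varepsilon=v+\varepsilon Av$, $w_\varepsilon=w+\varepsilon Aw$ and $\pi_\varepsilon=\mathrm{span}\{v_\varepsilon,w_\varepsilon\}$. Then, as $\varepsilon\to0$, $$K(p,\pi_\varepsilon)=K(p,\pi)+\varepsilon\,Q^c(g,R)(v,w,w,v;x,y)+O(\varepsilon^2).$$
   Context: A Kaehler manifold $(M,g,J)$: $J^2=-\mathrm{Id}$, $g(JX,JY)=g(X,Y)$, $\nabla J=0$. Curvature: $R(X,Y)Z=\nabla_X\nabla_YZ-\nabla_Y\nabla_XZ-\nabla_{[X,Y]}Z$, $R(X,Y,Z,W)=g(R(X,Y)Z,W)$; the sectional curvature of the plane spanned by linearly independent $a,b$ is $K(p,\mathrm{span}\{a,b\})=R(a,b,b,a)/(g(a,a)g(b,b)-g(a,b)^2)$. For vectors $X,Y$, $X\wedge_gY$ is the endomorphism $Z\mapsto g(Y,Z)X-g(X,Z)Y$, and $(X\wedge^c_gY)Z=(X\wedge_gY)Z+(JX\wedge_gJY)Z-2g(JX,Y)JZ$. For an endomorphism $B$, $(B\cdot R)(X_1,\dots,X_4)=-R(BX_1,X_2,X_3,X_4)-R(X_1,BX_2,X_3,X_4)-R(X_1,X_2,BX_3,X_4)-R(X_1,X_2,X_3,BX_4)$. The complex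 Tachibana tensor is $Q^c(g,R)(X_1,X_2,X_3,X_4;X,Y)=-((X\wedge^c_gY)\cdot R)(X_1,X_2,X_3,X_4)$. *)

(* Pointwise (algebraic) model of T_pM of a Kaehler manifold:
   T_pM = 'rV[R]_n with g_p the standard dot product (orthonormal frame),
   J_p a matrix acting on row vectors, R_p given by its components. *)
From mathcomp Require Import all_boot all_order all_algebra.
Set Implicit Arguments. Unset Strict Implicit. Unset Printing Implicit Defensive.
Import Order.TTheory GRing.Theory Num.Theory.
Local Open Scope ring_scope.

Section KaehlerPoint.
Variables (R : realFieldType) (n : nat).
Notation V := 'rV[R]_n.

Definition gmet (u v : V) : R := \sum_(i < n) u 0 i * v 0 i.

Definition Japp (J : 'M[R]_n) (u : V) : V := u *m J.

Definition Rform (Rc : 'I_n -> 'I_n -> 'I_n -> 'I_n -> R) (X Y Z W : V) : R :=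
  \sum_(i < n) \sum_(j < n) \sum_(k < n) \sum_(l < n)
     X 0 i * Y 0 j * Z 0 k * W 0 l * Rc i j k l.

Definition wedge (X Y : V) (Z : V) : V := gmet Y Z *: X - gmet X Z *: Y.

Definition wedgec (J : 'M[R]_n) (X Y : V) (Z : V) : V :=
  wedge X Y Z + wedge (Japp J X) (Japp J Y) Z - (2 * gmet (Japp J X) Y) *: Japp J Z.

Definition Bdot (B : V -> V) (Rf : V -> V -> V -> V -> R) (X1 X2 X3 X4 : V) : R :=
  - Rf (B X1) X2 X3 X4 - Rf X1 (B X2) X3 X4 - Rf X1 X2 (B X3) X4 - Rf X1 X2 X3 (B X4).

Definition Qc (J : 'M[R]_n) (Rf : V -> V -> V -> V -> R) (X1 X2 X3 X4 X Y : V) : R :=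
  - Bdot (wedgec J X Y) Rf X1 X2 X3 X4.

Definition sectK (Rf : V -> V -> V -> V -> R) (a b : V) : R :=
  Rf a b b a / (gmet a a * gmet b b - gmet a b ^+ 2).

Definition kaehler_point (J : 'M[R]_n) (Rc : 'I_n -> 'I_n -> 'I_n -> 'I_n -> R) : Prop :=
  (forall u, Japp J (Japp J u) = - u) /\
      (forall u v, gmet (Japp J u) (Japp J v) = gmet u v) /\
      (forall X Y Z W, Rform Rc X Y Z W = - Rform Rc Y X Z W) /\
      (forall X Y Z W, Rform Rc X Y Z W = - Rform Rc X Y W Z) /\
      (forall X Y Z W, Rform Rc X Y Z W = Rform Rc Z W X Y) /\
      (forall X Y Z W, Rform Rc X Y Z W + Rform Rc Y Z X W + Rform Rc Z X Y W = 0) /\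
     (forall X Y Z W, Rform Rc X Y (Japp J Z) (Japp J W) = Rform Rc X Y Z W).

End KaehlerPoint.

(* The perturbed frame v + eps A v, w + eps A w differs from {v, w} by a skew-adjoint
   endomorphism A, so its Gram determinant is 1 + O(eps^2) with no first-order term, while
   the first-order term of R(v_eps, w_eps, w_eps, v_eps) is -(A . R)(v, w, w, v).  For a
   Kaehler curvature tensor J . R = 0, and the complex wedge x /\^c y differs from A only by
   a multiple of J, so this first-order term is exactly Q^c(g, R)(v, w, w, v; x, y).  The
   sectional curvature is the quotient of the two expansions. *)
From mathcomp Require Import all_boot all_order all_algebra.
From mathcomp Require Import ring lra.
Set Implicit Arguments. Unset Strict Implicit.
Import Order.TTheory GRing.Theory Num.Theory.
Local Open Scope ring_scope.

Section RatioExpansion.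
Variable R : realFieldType.

Lemma normr_cubic_le (e c0 c1 c2 c3 : R) : `|e| <= 1 ->
  `|c0 + e * c1 + e ^+ 2 * c2 + e ^+ 3 * c3| <= `|c0| + `|c1| + `|c2| + `|c3|.
Proof.
move=> e_le1.
have scale_le k c : `|e ^+ k * c| <= `|c|.
  by rewrite normrM normrX ler_piMl // exprn_ile1.
have := ler_normD (c0 + e * c1 + e ^+ 2 * c2) (e ^+ 3 * c3).
have := ler_normD (c0 + e * c1) (e ^+ 2 * c2).
have := ler_normD c0 (e * c1).
have := scale_le 1%N c1; rewrite expr1.
have := scale_le 2%N c2; have := scale_le 3%N c3.
lra.
Qed.

Lemma normr_even_quartic_le (e d2 d4 : R) : `|e| <= 1 ->
  `|e ^+ 2 * d2 + e ^+ 4 * d4| <= `|e| * (`|d2| + `|d4|).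
Proof.
move=> e_le1; have e_ge0 : 0 <= `|e| by [].
have e2_le : `|e| ^+ 2 <= `|e| by rewrite expr2 ler_piMl.
have e4_le : `|e| ^+ 4 <= `|e| by rewrite exprSr ler_piMl // exprn_ile1.
have := ler_normD (e ^+ 2 * d2) (e ^+ 4 * d4).
rewrite (normrM (e ^+ 2)) (normrM (e ^+ 4)) !normrX.
have := ler_wpM2r (normr_ge0 d2) e2_le; have := ler_wpM2r (normr_ge0 d4) e4_le.
nra.
Qed.

Lemma ratio_quartic_first_order (N0 N1 N2 N3 N4 d2 d4 : R) :
  exists C delta : R, 0 < delta /\ forall e : R, `|e| < delta ->
    `|(N0 + e * N1 + e ^+ 2 * N2 + e ^+ 3 * N3 + e ^+ 4 * N4)
       / (1 + e ^+ 2 * d2 + e ^+ 4 * d4) - N0 - e * N1| <= C * e ^+ 2.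
Proof.
pose q : R := `|d2| + `|d4|; have q_ge0 : 0 <= q by rewrite addr_ge0.
pose M : R := `|N2 - d2 * N0| + `|N3 - d2 * N1| + `|N4 - d4 * N0| + `|- d4 * N1|.
exists (2 * M), (2 * q + 2)^-1; split=> [|e]; first by rewrite invr_gt0; lra.
move=> e_lt; have e_ge0 : 0 <= `|e| by [].
have e_small : `|e| * (2 * q + 2) < 1 by rewrite -ltr_pdivlMr ?mul1r //; lra.
have e_le1 : `|e| <= 1 by nra.
pose D := 1 + e ^+ 2 * d2 + e ^+ 4 * d4.
have D_ge : 1 / 2 <= D.
  have := normr_even_quartic_le d2 d4 e_le1; rewrite -/q /D.
  have := ler_norm (- (e ^+ 2 * d2 + e ^+ 4 * d4)); rewrite normrN; nra.
pose S := (N2 - d2 * N0) + e * (N3 - d2 * N1)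
          + e ^+ 2 * (N4 - d4 * N0) + e ^+ 3 * (- d4 * N1).
have -> : (N0 + e * N1 + e ^+ 2 * N2 + e ^+ 3 * N3 + e ^+ 4 * N4) / D - N0 - e * N1
          = e ^+ 2 * (S / D) by rewrite /S /D; field; rewrite -/D; apply/eqP; lra.
have SD_le : `|S / D| <= 2 * M.
  have S_le : `|S| <= M by exact: normr_cubic_le.
  rewrite normrM normfV (ger0_norm (_ : 0 <= D)); last by lra.
  rewrite ler_pdivrMr; last by lra.
  have M_ge0 : 0 <= M by apply: le_trans S_le.
  nra.
by rewrite normrM ger0_norm ?sqr_ge0 // mulrC ler_wpM2r ?sqr_ge0.
Qed.

End RatioExpansion.

Section TangentSpace.
Variables (R : realFieldType) (n : nat).
Local Notation V := 'rV[R]_n.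

Lemma gmetC (u v : V) : gmet u v = gmet v u.
Proof. by apply: eq_bigr => i _; rewrite mulrC. Qed.

Lemma gmetDl (u u' v : V) : gmet (u + u') v = gmet u v + gmet u' v.
Proof. by rewrite /gmet -big_split; apply: eq_bigr => i _; rewrite mxE mulrDl. Qed.

Lemma gmetZl (a : R) (u v : V) : gmet (a *: u) v = a * gmet u v.
Proof. by rewrite /gmet mulr_sumr; apply: eq_bigr => i _; rewrite mxE mulrA. Qed.

Lemma gmetDr (u v v' : V) : gmet u (v + v') = gmet u v + gmet u v'.
Proof. by rewrite !(gmetC u) gmetDl. Qed.

Lemma gmetZr (a : R) (u v : V) : gmet u (a *: v) = a * gmet u v.
Proof. by rewrite !(gmetC u) gmetZl. Qed.

Definition gram (a b : V) : R := gmet a a * gmet b b - gmet a b ^+ 2.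

Lemma sectKE (Rf : V -> V -> V -> V -> R) (a b : V) :
  sectK Rf a b = Rf a b b a / gram a b.
Proof. by []. Qed.

Definition g_skew (B : V -> V) : Prop := forall u z, gmet u (B z) = - gmet (B u) z.

Lemma wedge_skew (x y : V) : g_skew (wedge x y).
Proof.
move=> u z; rewrite /wedge -!scaleNr !(gmetDl, gmetDr, gmetZl, gmetZr).
rewrite (gmetC y u) (gmetC x u); ring.
Qed.

Lemma g_skewD (B B' : V -> V) :
  g_skew B -> g_skew B' -> g_skew (fun z => B z + B' z).
Proof. by move=> sB sB' u z; rewrite gmetDl gmetDr sB sB' opprD. Qed.

Lemma g_skew_diag (B : V -> V) (u : V) : g_skew B -> gmet u (B u) = 0.
Proof.
move=> sB; have := sB u u; rewrite (gmetC (B u)) => /eqP.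
by rewrite -subr_eq0 opprK -mulr2n mulrn_eq0 /= => /eqP.
Qed.

Lemma gram_skew_perturb (B : V -> V) (v w : V) (e : R) : g_skew B ->
  gmet v v = 1 -> gmet w w = 1 -> gmet v w = 0 ->
  gram (v + e *: B v) (w + e *: B w)
  = 1 + e ^+ 2 * (gmet (B v) (B v) + gmet (B w) (B w)) + e ^+ 4 * gram (B v) (B w).
Proof.
move=> sB vv ww vw; rewrite /gram !(gmetDl, gmetDr, gmetZl, gmetZr).
rewrite (gmetC (B v) v) (gmetC (B w) w) (sB v w).
rewrite (g_skew_diag v sB) (g_skew_diag w sB) vv ww vw.
ring.
Qed.

End TangentSpace.

Section CurvatureForm.
Variables (R : realFieldType) (n : nat) (Rc : 'I_n -> 'I_n -> 'I_n -> 'I_n -> R).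
Local Notation V := 'rV[R]_n.
Local Notation Rf := (Rform Rc).

Lemma Rform_D1 (X X' Y Z W : V) : Rf (X + X') Y Z W = Rf X Y Z W + Rf X' Y Z W.
Proof.
by rewrite /Rform; do 4 (rewrite -big_split /=; apply: eq_bigr => ? _); rewrite !mxE; ring.
Qed.

Lemma Rform_D2 (X Y Y' Z W : V) : Rf X (Y + Y') Z W = Rf X Y Z W + Rf X Y' Z W.
Proof.
by rewrite /Rform; do 4 (rewrite -big_split /=; apply: eq_bigr => ? _); rewrite !mxE; ring.
Qed.

Lemma Rform_D3 (X Y Z Z' W : V) : Rf X Y (Z + Z') W = Rf X Y Z W + Rf X Y Z' W.
Proof.
by rewrite /Rform; do 4 (rewrite -big_split /=; apply: eq_bigr => ? _); rewrite !mxE; ring.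
Qed.

Lemma Rform_D4 (X Y Z W W' : V) : Rf X Y Z (W + W') = Rf X Y Z W + Rf X Y Z W'.
Proof.
by rewrite /Rform; do 4 (rewrite -big_split /=; apply: eq_bigr => ? _); rewrite !mxE; ring.
Qed.

Lemma Rform_Z1 (a : R) (X Y Z W : V) : Rf (a *: X) Y Z W = a * Rf X Y Z W.
Proof.
by rewrite /Rform; do 4 (rewrite mulr_sumr; apply: eq_bigr => ? _); rewrite !mxE; ring.
Qed.

Lemma Rform_Z2 (a : R) (X Y Z W : V) : Rf X (a *: Y) Z W = a * Rf X Y Z W.
Proof.
by rewrite /Rform; do 4 (rewrite mulr_sumr; apply: eq_bigr => ? _); rewrite !mxE; ring.
Qed.

Lemma Rform_Z3 (a : R) (X Y Z W : V) : Rf X Y (a *: Z) W = a * Rf X Y Z W.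
Proof.
by rewrite /Rform; do 4 (rewrite mulr_sumr; apply: eq_bigr => ? _); rewrite !mxE; ring.
Qed.

Lemma Rform_Z4 (a : R) (X Y Z W : V) : Rf X Y Z (a *: W) = a * Rf X Y Z W.
Proof.
by rewrite /Rform; do 4 (rewrite mulr_sumr; apply: eq_bigr => ? _); rewrite !mxE; ring.
Qed.

Lemma Rform_perturb (B : V -> V) (X1 X2 X3 X4 : V) :
  exists N2 N3 N4 : R, forall e : R,
    Rf (X1 + e *: B X1) (X2 + e *: B X2) (X3 + e *: B X3) (X4 + e *: B X4)
    = Rf X1 X2 X3 X4 + e * - Bdot B Rf X1 X2 X3 X4
      + e ^+ 2 * N2 + e ^+ 3 * N3 + e ^+ 4 * N4.
Proof.
set Y1 := B X1; set Y2 := B X2; set Y3 := B X3; set Y4 := B X4.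
exists (Rf Y1 Y2 X3 X4 + Rf Y1 X2 Y3 X4 + Rf Y1 X2 X3 Y4
        + Rf X1 Y2 Y3 X4 + Rf X1 Y2 X3 Y4 + Rf X1 X2 Y3 Y4),
       (Rf Y1 Y2 Y3 X4 + Rf Y1 Y2 X3 Y4 + Rf Y1 X2 Y3 Y4 + Rf X1 Y2 Y3 Y4),
       (Rf Y1 Y2 Y3 Y4) => e.
rewrite /Bdot !(Rform_D1, Rform_D2, Rform_D3, Rform_D4).
rewrite !(Rform_Z1, Rform_Z2, Rform_Z3, Rform_Z4).
ring.
Qed.

Lemma Bdot_subZ (B B' : V -> V) (c : R) (X1 X2 X3 X4 : V) :
  Bdot (fun z => B z - c *: B' z) Rf X1 X2 X3 X4
  = Bdot B Rf X1 X2 X3 X4 - c * Bdot B' Rf X1 X2 X3 X4.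
Proof.
rewrite /Bdot -!scaleNr !(Rform_D1, Rform_D2, Rform_D3, Rform_D4).
rewrite !(Rform_Z1, Rform_Z2, Rform_Z3, Rform_Z4).
ring.
Qed.

(* J . R = 0: by J-invariance J may be moved from one slot of a pair to the other
   at the cost of a sign, and pair symmetry transports this to the first pair. *)
Lemma kaehler_Bdot_J (J : 'M[R]_n) (X1 X2 X3 X4 : V) :
  kaehler_point J Rc -> Bdot (Japp J) Rf X1 X2 X3 X4 = 0.
Proof.
move=> [JJ [_ [_ [_ [pair_sym [_ J_inv]]]]]].
have J_swap X Y Z W : Rf X Y (Japp J Z) W = - Rf X Y Z (Japp J W).
  by rewrite -J_inv JJ -scaleN1r Rform_Z3 mulN1r.
rewrite /Bdot (pair_sym (Japp J X1)) (pair_sym X1 (Japp J X2)) !J_swap.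
ring.
Qed.

Lemma Qc_kaehler (J : 'M[R]_n) (x y X1 X2 X3 X4 : V) : kaehler_point J Rc ->
  Qc J Rf X1 X2 X3 X4 x y
  = - Bdot (fun z => wedge x y z + wedge (Japp J x) (Japp J y) z) Rf X1 X2 X3 X4.
Proof. by move=> kp; rewrite /Qc /wedgec Bdot_subZ kaehler_Bdot_J // mulr0 subr0. Qed.

End CurvatureForm.

Theorem mainTheorem6 (R : realFieldType) (n : nat) (J : 'M[R]_n)
    (Rc : 'I_n -> 'I_n -> 'I_n -> 'I_n -> R) (v w x y : 'rV[R]_n) :
  kaehler_point J Rc ->
  gmet v v = 1 -> gmet w w = 1 -> gmet v w = 0 ->
  gmet x x = 1 -> gmet y y = 1 -> gmet x y = 0 ->
  let A := fun Z => wedge x y Z + wedge (Japp J x) (Japp J y) Z in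
  exists C delta : R, 0 < delta /\
    forall eps : R, `|eps| < delta ->
      `| sectK (Rform Rc) (v + eps *: A v) (w + eps *: A w)
         - sectK (Rform Rc) v w
         - eps * Qc J (Rform Rc) v w w v x y | <= C * eps ^+ 2.
Proof.
move=> kp vv ww vw _ _ _ A.
have skewA : g_skew A by apply: g_skewD; apply: wedge_skew.
have [N2 [N3 [N4 numE]]] := Rform_perturb Rc A v w w v.
have [C [delta [delta_gt0 ratio_le]]] := ratio_quartic_first_order
  (Rform Rc v w w v) (- Bdot A (Rform Rc) v w w v) N2 N3 N4
  (gmet (A v) (A v) + gmet (A w) (A w)) (gram (A v) (A w)).
exists C, delta; split=> // e /ratio_le.
have gram_vw : gram v w = 1 by rewrite /gram vv ww vw expr0n subr0 mulr1.
by rewrite !sectKE numE gram_skew_perturb // gram_vw divr1 Qc_kaehler.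
Qed.
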